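(* Let $K\subset\mathbb{R}^n$ be a convex body and $c\in\mathbb{R}^n$ such that $c+r(K)\mathbb{B}$ is an inball and $\mathbb{B}$ is the circumball of $K$. Let $k\in\{2,\dots,n+1\}$ and $p^1,\dots,p^k\in K\cap\mathbb{S}$ with $0\in\mathrm{conv}\{p^1,\dots,p^k\}$, and set $T':=\mathrm{conv}\{p^1,\dots,p^k\}$ and $C:=\mathrm{conv}\big(T'\cup(c+r(K)\mathbb{B})\big)$. Then \[ D(C)=\max\{D(T'),\ \|p^i-c\|+r(C)\ :\ i\in[k]\}. \]
   Context: $\mathbb{B}$, $\mathbb{S}$ are the Euclidean unit ball and sphere; $r(\cdot)$ is the inradius (radius of a largest contained ball), $D(\cdot)$ the diameter. The circumball is the smallest ball containing $K$; an inball is a largest ball contained in $K$. $[k]=\{1,\dots,k\}$. *)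

From HB Require Import structures.
From mathcomp Require Import all_boot all_order all_algebra.
From mathcomp Require Import boolp classical_sets reals.
Set Implicit Arguments. Unset Strict Implicit. Unset Printing Implicit Defensive.
Import Order.TTheory GRing.Theory Num.Theory.
Local Open Scope ring_scope.
Local Open Scope classical_set_scope.

Section Defs.
Variables (R : realType) (n : nat).
Notation vec := 'rV[R]_n.

Definition edot (x y : vec) : R := \sum_(i < n) x 0 i * y 0 i.
Definition enorm (x : vec) : R := Num.sqrt (edot x x).

Definition cball (c : vec) (rho : R) : set vec := [set x | enorm (x - c) <= rho].
Definition usphere : set vec := [set x | enorm x = 1].

Definition convex_set (A : set vec) : Prop :=
  forall x y (t : R), A x -> A y -> 0 <= t -> t <= 1 -> A (t *: x + (1 - t) *: y).

Definition eclosed (A : set vec) : Prop :=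
  forall x, (forall e : R, 0 < e -> exists2 y, A y & enorm (x - y) < e) -> A x.
Definition ebounded (A : set vec) : Prop := exists M : R, forall x, A x -> enorm x <= M.

(* convex body: compact convex set with nonempty interior *)
Definition convex_body (K : set vec) : Prop :=
  [/\ convex_set K, eclosed K, ebounded K &
      exists c (rho : R), 0 < rho /\ cball c rho `<=` K].

Definition conv (A : set vec) : set vec :=
  [set x | exists m (q : 'I_m -> vec) (l : 'I_m -> R),
     [/\ forall i, A (q i), forall i, 0 <= l i, \sum_(i < m) l i = 1 &
         x = \sum_(i < m) l i *: q i]].

Definition inradius (A : set vec) : R :=
  sup [set rho : R | 0 <= rho /\ exists c, cball c rho `<=` A].

Definition diam (A : set vec) : R :=
  sup [set d : R | exists x y, [/\ A x, A y & d = enorm (x - y)]].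

Definition is_inball (K : set vec) (c : vec) (rho : R) : Prop :=
  rho = inradius K /\ cball c rho `<=` K.

Definition is_circumball (K : set vec) (c : vec) (rho : R) : Prop :=
  K `<=` cball c rho /\ forall c' (rho' : R), K `<=` cball c' rho' -> rho <= rho'.

End Defs.

(* Since c + r B sits in K, which sits in the unit ball, and r is already the
   inradius of K, the ball is also an inball of C, and every p^i lies at distance
   at least r from c.  The diameter of C is attained on its generators T' and
   c + r B: two points of T' are at most D(T') apart, a point x of T' and a point
   of the ball at most |x - c| + r, which is bounded by its value at a vertex p^i,
   and two points of the ball at most 2r <= |p^i - c| + r.  Conversely the point of
   the ball antipodal to p^i realizes |p^i - c| + r. *)

From HB Require Import structures.
From mathcomp Require Import all_boot all_order all_algebra.
From mathcomp Require Import boolp classical_sets reals.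
From mathcomp Require Import lra.
Import Order.TTheory GRing.Theory Num.Theory.
Local Open Scope ring_scope.
Local Open Scope classical_set_scope.

Set Implicit Arguments.
Unset Strict Implicit.
Unset Printing Implicit Defensive.

Section EuclideanNorm.
Context {R : realType} {n : nat}.
Implicit Types x y z : 'rV[R]_n.

Lemma edotC x y : edot x y = edot y x.
Proof. by apply: eq_bigr => i _; rewrite mulrC. Qed.

Lemma edotDl x y z : edot (x + y) z = edot x z + edot y z.
Proof. by rewrite /edot -big_split; apply: eq_bigr => i _; rewrite mxE mulrDl. Qed.

Lemma edotZl a x y : edot (a *: x) y = a * edot x y.
Proof. by rewrite /edot mulr_sumr; apply: eq_bigr => i _; rewrite mxE mulrA. Qed.

Lemma edotDr x y z : edot z (x + y) = edot z x + edot z y.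
Proof. by rewrite edotC edotDl !(edotC z). Qed.

Lemma edotZr a x y : edot y (a *: x) = a * edot y x.
Proof. by rewrite edotC edotZl edotC. Qed.

Lemma edot_ge0 x : 0 <= edot x x.
Proof. by apply: sumr_ge0 => i _; rewrite -expr2 sqr_ge0. Qed.

Lemma edot_eq0 x : edot x x = 0 -> x = 0.
Proof.
move=> /eqP; rewrite psumr_eq0 => [/allP x0|i _]; last by rewrite -expr2 sqr_ge0.
apply/rowP => i; rewrite mxE.
by have /implyP/(_ isT) := x0 i (mem_index_enum _); rewrite -expr2 sqrf_eq0 => /eqP.
Qed.

Lemma edot_le_enorm x y : edot x y <= enorm x * enorm y.
Proof.
set a := edot x x; set b := edot x y; set c := edot y y.
have a_ge0 : 0 <= a by apply: edot_ge0.
have c_ge0 : 0 <= c by apply: edot_ge0.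
have b2_le : b ^+ 2 <= a * c.
  have [c0|c_neq0] := eqVneq c 0.
    have y0 : y = 0 by apply: edot_eq0.
    by rewrite /b y0 -(scale0r 0) edotZr mul0r expr0n /= mulr_ge0.
  have c_gt0 : 0 < c by rewrite lt_def c_neq0 c_ge0.
  (* expand [0 <= |c x - b y|^2 = c (a c - b^2)] *)
  have := edot_ge0 (c *: x - b *: y).
  rewrite -scaleNr !(edotDl, edotDr, edotZl, edotZr) -/a -/c (edotC y x) -/b => h.
  have : 0 <= c * (a * c - b ^+ 2) by nra.
  by rewrite pmulr_rge0 // subr_ge0.
apply: le_trans (ler_norm b) _.
by rewrite /enorm -sqrtrM // -/a -/c -sqrtr_sqr ler_sqrt // mulr_ge0.
Qed.

Lemma enormD x y : enorm (x + y) <= enorm x + enorm y.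
Proof.
rewrite /enorm -[X in _ <= X]ger0_norm ?addr_ge0 ?sqrtr_ge0 //.
rewrite -sqrtr_sqr ler_sqrt ?sqr_ge0 //.
have := edot_le_enorm x y; rewrite /enorm => h.
rewrite edotDl !edotDr (edotC y x) sqrrD !sqr_sqrtr ?edot_ge0 //; lra.
Qed.

Lemma enormZ a x : enorm (a *: x) = `|a| * enorm x.
Proof. by rewrite /enorm edotZl edotZr mulrA -expr2 sqrtrM ?sqr_ge0 // sqrtr_sqr. Qed.

Lemma enorm0 : enorm (0 : 'rV[R]_n) = 0.
Proof. by rewrite -(scale0r 0) enormZ normr0 mul0r. Qed.

Lemma enormN x : enorm (- x) = enorm x.
Proof. by rewrite -scaleN1r enormZ normrN1 mul1r. Qed.

Lemma enorm_distC x y : enorm (x - y) = enorm (y - x).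
Proof. by rewrite -enormN opprB. Qed.

Lemma enorm_dist_le x y z : enorm (x - y) <= enorm (x - z) + enorm (y - z).
Proof. by rewrite -(subrKA z) [enorm (y - z)]enorm_distC enormD. Qed.

Lemma enorm_sum_le m (l : 'I_m -> R) (q : 'I_m -> 'rV[R]_n) :
  (forall i, 0 <= l i) ->
  enorm (\sum_(i < m) l i *: q i) <= \sum_(i < m) l i * enorm (q i).
Proof.
move=> l_ge0; apply: (big_rec2 (fun v s => enorm v <= s)); first by rewrite enorm0.
move=> i v s _ h; apply: le_trans (enormD _ _) _.
by rewrite enormZ ger0_norm // lerD2l.
Qed.

End EuclideanNorm.

Section ConvexHull.
Context {R : realType} {n : nat}.
Implicit Types (A B : set 'rV[R]_n) (x y : 'rV[R]_n).

Lemma sub_conv A : A `<=` conv A.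
Proof.
move=> x Ax; exists 1%N, (fun _ => x), (fun _ => 1).
by split=> //; rewrite big_ord1 ?scale1r.
Qed.

Lemma conv_mono A B : A `<=` B -> conv A `<=` conv B.
Proof. by move=> AB x [m [q [l [Aq l_ge0 l1 ->]]]]; exists m, q, l; split=> // i; apply: AB. Qed.

Lemma convex_conv_sub A : convex_set A -> conv A `<=` A.
Proof.
move=> cvxA x [m [q [l [Aq l_ge0 l1 ->]]]].
elim: m q l Aq l_ge0 l1 => [|m IH] q l Aq l_ge0 l1.
  by move: l1; rewrite big_ord0 => /eqP; rewrite eq_sym oner_eq0.
move: l1; rewrite !big_ord_recr /=.
set s := \sum_(i < m) _; set t := l ord_max => st1.
have s_ge0 : 0 <= s by apply: sumr_ge0.
have [s0|s_neq0] := eqVneq s 0.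
  have l0 (i : 'I_m) : l (widen_ord (leqnSn m) i) = 0.
    by move/eqP: s0; rewrite psumr_eq0 // => /allP/(_ i (mem_index_enum _))/eqP.
  rewrite big1 => [|i _]; last by rewrite l0 scale0r.
  have -> : t = 1 by rewrite -st1 s0 add0r.
  by rewrite add0r scale1r.
have s_gt0 : 0 < s by rewrite lt_def s_neq0 s_ge0.
(* the first [m] points carry total weight [s]: renormalize them and use convexity *)
rewrite (_ : \sum_(i < m) _ = s *: \sum_(i < m)
    (l (widen_ord (leqnSn m) i) / s) *: q (widen_ord (leqnSn m) i)); last first.
  by rewrite scaler_sumr; apply: eq_bigr => i _; rewrite scalerA mulrCA mulfV ?mulr1.
rewrite (_ : t = 1 - s); last by lra.
apply: cvxA => //; last by rewrite -st1 lerDl l_ge0.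
apply: IH => [i|i|]; [exact: Aq | by rewrite divr_ge0 |].
by rewrite -mulr_suml mulfV.
Qed.

Lemma conv_sub_convex A B : convex_set B -> A `<=` B -> conv A `<=` B.
Proof. by move=> cvxB AB x /(conv_mono AB); apply: convex_conv_sub. Qed.

Lemma conv_dist_le A y (d : R) :
  (forall a, A a -> enorm (a - y) <= d) -> forall x, conv A x -> enorm (x - y) <= d.
Proof.
move=> Ad x [m [q [l [Aq l_ge0 l1 ->]]]].
rewrite (_ : _ - y = \sum_(i < m) l i *: (q i - y)); last first.
  rewrite -[y in LHS]scale1r -l1 scaler_suml -sumrB.
  by apply: eq_bigr => i _; rewrite scalerBr.
apply: le_trans (enorm_sum_le _ l_ge0) _.
rewrite -[d]mul1r -l1 mulr_suml; apply: ler_sum => i _.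
by apply: ler_wpM2l => //; apply: Ad.
Qed.

Lemma conv_enorm_le A (d : R) :
  (forall a, A a -> enorm a <= d) -> forall x, conv A x -> enorm x <= d.
Proof.
move=> Ad x /(conv_dist_le (y := 0)); rewrite subr0; apply=> a /Ad.
by rewrite subr0.
Qed.

Lemma conv_pairwise_dist_le A (d : R) :
  (forall a b, A a -> A b -> enorm (a - b) <= d) ->
  forall x y, conv A x -> conv A y -> enorm (x - y) <= d.
Proof.
move=> Ad x y Ax Ay; rewrite enorm_distC; move: y Ay.
apply: conv_dist_le => b Ab; rewrite enorm_distC; move: x Ax.
by apply: conv_dist_le => a Aa; apply: Ad.
Qed.

End ConvexHull.

Section DiameterInradius.
Context {R : realType} {n : nat}.
Implicit Types (A B : set 'rV[R]_n) (c e q x y : 'rV[R]_n).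

Lemma dist_le_diam A x y : ebounded A -> A x -> A y -> enorm (x - y) <= diam A.
Proof.
move=> [M AM] Ax Ay; apply: ub_le_sup; last by exists x, y.
exists (M + M) => _ [a [b [Aa Ab ->]]].
by apply: le_trans (enorm_dist_le a b 0) _; rewrite !subr0 lerD ?AM.
Qed.

Lemma diam_le A x0 (d : R) :
  A x0 -> (forall x y, A x -> A y -> enorm (x - y) <= d) -> diam A <= d.
Proof.
move=> Ax0 Ad; apply: ge_sup => [|_ [x [y [Ax Ay ->]]]]; last exact: Ad.
by exists (enorm (x0 - x0)), x0, x0.
Qed.

Lemma le_diam A B x0 : ebounded B -> A `<=` B -> A x0 -> diam A <= diam B.
Proof. by move=> bB AB Ax0; apply: (diam_le Ax0) => x y /AB Bx /AB; apply: dist_le_diam. Qed.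

Lemma cball_radius_le A c e (rho M : R) : enorm e = 1 -> 0 <= rho ->
  (forall x, A x -> enorm x <= M) -> cball c rho `<=` A -> rho <= M.
Proof.
move=> e1 rho_ge0 AM cA.
have Ap : A (c + rho *: e).
  by apply: cA; rewrite /cball /= addrAC subrr add0r enormZ e1 mulr1 ger0_norm.
have Am : A (c - rho *: e).
  by apply: cA; rewrite /cball /= addrAC subrr add0r enormN enormZ e1 mulr1 ger0_norm.
have := enorm_dist_le (c + rho *: e) (c - rho *: e) 0.
rewrite !subr0 opprB addrCA addrAC subrr add0r -scalerDl enormZ e1 mulr1 ger0_norm ?addr_ge0 //.
by have := AM _ Ap; have := AM _ Am; lra.
Qed.

Lemma le_inradius A c e (rho : R) :
  enorm e = 1 -> ebounded A -> 0 <= rho -> cball c rho `<=` A -> rho <= inradius A.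
Proof.
move=> e1 [M AM] rho_ge0 cA; apply: ub_le_sup; last by split=> //; exists c.
by exists M => rho' [r_ge0 [c' c'A]]; apply: cball_radius_le e1 r_ge0 AM c'A.
Qed.

Lemma le_inradius_sub A B c e (rho : R) : enorm e = 1 -> ebounded B -> A `<=` B ->
  0 <= rho -> cball c rho `<=` A -> inradius A <= inradius B.
Proof.
move=> e1 bB AB rho_ge0 cA; apply: ge_sup => [|rho' [r_ge0 [c' c'A]]].
  by exists rho; split=> //; exists c.
by apply: le_inradius e1 bB r_ge0 _; apply: subset_trans c'A AB.
Qed.

Lemma cball_in_unit_ball_le_dist c (r : R) q :
  cball c r `<=` cball 0 1 -> enorm q = 1 -> r <= enorm (q - c).
Proof.
move=> c_sub q1; rewrite leNgt; apply/negP => lt_dist.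
(* pushing [q] slightly outwards keeps it in [c + r B] but leaves the unit ball *)
set t := r - enorm (q - c).
have t_gt0 : 0 < t by rewrite subr_gt0.
have /c_sub : cball c r ((1 + t) *: q).
  rewrite /cball /= scalerDl scale1r addrAC; apply: le_trans (enormD _ _) _.
  by rewrite enormZ q1 mulr1 gtr0_norm // /t; lra.
by rewrite /cball /= subr0 enormZ q1 mulr1 gtr0_norm; lra.
Qed.

Lemma cball_antipode c (r : R) x : 0 <= r -> 0 < enorm (x - c) ->
  exists2 w, cball c r w & enorm (x - w) = enorm (x - c) + r.
Proof.
move=> r_ge0 d_gt0; set d := enorm (x - c).
have rd_ge0 : 0 <= r / d by rewrite divr_ge0 // ltW.
exists (c - (r / d) *: (x - c)).
  by rewrite /cball /= addrAC subrr add0r enormN enormZ ger0_norm // divfK ?gt_eqF.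
rewrite opprB addrCA addrC -{1}[x - c]scale1r -scalerDl enormZ ger0_norm ?addr_ge0 //.
by rewrite mulrDl mul1r divfK ?gt_eqF.
Qed.

End DiameterInradius.

Section HullWithBall.
Context {R : realType} {n : nat}.
Context {k : nat} {p : 'I_k.+1 -> 'rV[R]_n} {c : 'rV[R]_n} {r : R}.
Hypotheses (r_gt0 : 0 < r) (r_le_dist : forall i, r <= enorm (p i - c)).

Local Notation hull := (conv (range p)).
Local Notation C := (conv (hull `|` cball c r)).
Local Notation far_bound := (\big[Num.max/0]_(i < k.+1) (enorm (p i - c) + r)).

Lemma hull_sub_hull_cball : hull `<=` C.
Proof. by move=> x hull_x; apply: sub_conv; left. Qed.

Lemma cball_sub_hull_cball : cball c r `<=` C.
Proof. by move=> x ball_x; apply: sub_conv; right. Qed.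

Lemma hull_cball_point i : C (p i).
Proof. by apply: hull_sub_hull_cball; apply: sub_conv; exists i. Qed.

Lemma hull_cball_bounded : ebounded C.
Proof.
set M := \big[Num.max/0]_(i < k.+1) enorm (p i).
exists (Num.max M (enorm c + r)); apply: conv_enorm_le => a.
rewrite le_max => -[hull_a|ball_a]; apply/orP.
  left; move: a hull_a; apply: conv_enorm_le => _ [i _ <-].
  exact: le_bigmax.
by right; have := enormD (a - c) c; rewrite subrK; move: ball_a; rewrite /cball /=; lra.
Qed.

Lemma hull_bounded : ebounded hull.
Proof. by case: hull_cball_bounded => M CM; exists M => x /hull_sub_hull_cball /CM. Qed.

Lemma diam_hull_cball_le : diam C <= Num.max (diam hull) far_bound.
Proof.
have dist_far i : enorm (p i - c) + r <= far_bound.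
  exact: le_bigmax.
have hull_dist x : hull x -> enorm (x - c) <= far_bound - r.
  by apply: conv_dist_le => _ [i _ <-]; rewrite lerBrDr dist_far.
apply: (diam_le (hull_cball_point ord0)); apply: conv_pairwise_dist_le => a b Aa Ab.
have via_c := enorm_dist_le a b c; rewrite le_max; apply/orP.
case: Aa Ab => [hull_a|ball_a] [hull_b|ball_b].
- by left; apply: dist_le_diam hull_bounded hull_a hull_b.
- by right; have := hull_dist _ hull_a; move: ball_b; rewrite /cball /=; lra.
- by right; have := hull_dist _ hull_b; move: ball_a; rewrite /cball /=; lra.
- right; have := dist_far ord0; have := r_le_dist ord0.
  by move: ball_a ball_b; rewrite /cball /=; lra.
Qed.

Lemma diam_hull_cball_ge : Num.max (diam hull) far_bound <= diam C.
Proof.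
rewrite ge_max; apply/andP; split.
  by apply: le_diam hull_cball_bounded hull_sub_hull_cball _; apply: sub_conv; exists ord0.
apply: bigmax_le => [|i _].
  have := dist_le_diam hull_cball_bounded (hull_cball_point ord0) (hull_cball_point ord0).
  by rewrite subrr enorm0.
have [w ball_w <-] := cball_antipode (ltW r_gt0) (lt_le_trans r_gt0 (r_le_dist i)).
exact: dist_le_diam hull_cball_bounded (hull_cball_point i) (cball_sub_hull_cball ball_w).
Qed.

Lemma diam_hull_cball : diam C = Num.max (diam hull) far_bound.
Proof. by apply/le_anti; rewrite diam_hull_cball_le diam_hull_cball_ge. Qed.

End HullWithBall.

Theorem corollary5p6 (R : realType) (n : nat) (K : set 'rV[R]_n) (c : 'rV[R]_n)
  (k : nat) (p : 'I_k -> 'rV[R]_n) :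
  convex_body K ->
  is_inball K c (inradius K) ->
  is_circumball K 0 1 ->
  (2 <= k <= n.+1)%N ->
  (forall i, K (p i) /\ usphere (p i)) ->
  conv (range p) 0 ->
  let T' := conv (range p) in
  let C := conv (T' `|` cball c (inradius K)) in
  diam C = Num.max (diam T')
             (\big[Num.max/0]_(i < k) (enorm (p i - c) + inradius C)).
Proof.
move=> [cvxK _ _ [c0 [rho0 [rho0_gt0 ball0]]]] [_ ball_K] [K_unit _].
case: k p => [|k] p; first by case/andP.
move=> _ pK _ T' C; set r := inradius K in ball_K *.
have p_unit i : enorm (p i) = 1 by case: (pK i).
have K_bounded : ebounded K by exists 1 => x /K_unit; rewrite /cball /= subr0.
have r_gt0 : 0 < r.
  exact: lt_le_trans rho0_gt0 (le_inradius (p_unit ord0) K_bounded (ltW rho0_gt0) ball0).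
have T'_K : T' `<=` K.
  by apply: (conv_sub_convex cvxK) => _ [i _ <-]; case: (pK i).
have C_K : C `<=` K by apply: (conv_sub_convex cvxK) => x [/T'_K|/ball_K].
have -> : inradius C = r.
  apply/le_anti/andP; split.
    exact: le_inradius_sub (p_unit ord0) K_bounded C_K (ltW r_gt0) cball_sub_hull_cball.
  exact: le_inradius (p_unit ord0) hull_cball_bounded (ltW r_gt0) cball_sub_hull_cball.
apply: diam_hull_cball r_gt0 _ => i.
exact: cball_in_unit_ball_le_dist (subset_trans ball_K K_unit) (p_unit i).
Qed.
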